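(* For every field $K$ and every integer $n\geq 1$, $\mathrm{card}(\widetilde{K}_n)\leq (n+1)^{n^2+n+1}$. Consequently $\widetilde{K}$ is countable.
   Context: Let $K$ be a field. For $r\in K$, a finite set $A(r)$ with $\{r\}\subseteq A(r)\subseteq K$ is called adequate for $r$ if every mapping $f:A(r)\to K$ satisfying (1) if $1\in A(r)$ then $f(1)=1$; (2) if $a,b\in A(r)$ and $a+b\in A(r)$ then $f(a+b)=f(a)+f(b)$; (3) if $a,b\in A(r)$ and $a\cdot b\in A(r)$ then $f(a\cdot b)=f(a)\cdot f(b)$, also satisfies $f(r)=r$. $\widetilde{K}$ denotes the set of all $r\in K$ for which some finite set adequate for $r$ exists. For $n\ge1$, $\widetilde{K}_n$ denotes the set of all $r\in K$ for which there exists a set $A(r)$ adequate for $r$ with $\mathrm{card}(A(r))\leq n$; thus $\widetilde{K}=\bigcup_{n\ge1}\widetilde{K}_n$. *)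

From HB Require Import structures.
From mathcomp Require Import all_boot all_algebra.
From mathcomp Require Import finmap.
Set Implicit Arguments. Unset Strict Implicit. Unset Printing Implicit Defensive.
Import GRing.Theory.
Local Open Scope ring_scope.
Local Open Scope fset_scope.

(* A finite set A (an fset of K) is adequate for r: r \in A, and every map
   f : A -> K (represented as f : K -> K, only its values on A matter)
   satisfying (1)-(3) fixes r. *)
Definition adequate (K : fieldType) (r : K) (A : {fset K}) : Prop :=
  r \in A /\
  forall f : K -> K,
    ((1:K) \in A -> f 1 = 1) ->
    (forall a b, a \in A -> b \in A -> (a + b)%R \in A -> f (a + b)%R = (f a + f b)%R) ->
    (forall a b, a \in A -> b \in A -> (a * b)%R \in A -> f (a * b)%R = (f a * f b)%R) ->
    f r = r.

Definition Ktilde (K : fieldType) (r : K) : Prop :=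
  exists A : {fset K}, adequate r A.

Definition Ktilde_n (K : fieldType) (n : nat) (r : K) : Prop :=
  exists A : {fset K}, (#|` A| <= n)%N /\ adequate r A.

From HB Require Import structures.
From mathcomp Require Import all_boot all_algebra.
From mathcomp Require Import finmap.
From Stdlib Require Import ClassicalEpsilon.

Set Implicit Arguments. Unset Strict Implicit. Unset Printing Implicit Defensive.
Import GRing.Theory.
Local Open Scope ring_scope.

(* List an adequate set A for r, of size at most n, as a sequence a with head r,
   and record for every pair of entries the position in a of their sum and of
   their product (or "absent"), together with the position of 1.  If two such
   sequences a, b have the same record, then x |-> b[index x a] respects 1, sums
   and products inside A, so by adequacy it fixes r, i.e. the heads agree.  Hence
   r is determined by its record, and there are at most (n+1)^(n^2+n+1) records. *)

Section PositionCode.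

Variables (R : comPzSemiRingType) (n : nat).

(* The value n encodes "not in the sequence". *)
Definition position (a : seq R) (x : R) : 'I_n.+1 :=
  inord (if x \in a then index x a else n).

Lemma positionE a x : (size a <= n)%N ->
  (position a x : nat) = if x \in a then index x a else n.
Proof.
move=> size_a; rewrite /position inordK //; case: ifP => // x_a.
by rewrite ltnS (leq_trans _ size_a) // ltnW // index_mem.
Qed.

Definition transfer (a b : seq R) (x : R) : R := nth 0 b (index x a).

Lemma transfer_position a b u v : (size a <= n)%N -> (size b <= n)%N ->
  position a u = position b v -> u \in a -> transfer a b u = v.
Proof.
move=> size_a size_b /(congr1 (@nat_of_ord _)).
rewrite /transfer !positionE // => + u_a; rewrite u_a.
case: ifP => [v_b -> | _ u_n]; first by rewrite nth_index.
by have := index_mem u a; rewrite u_a u_n => /leq_trans/(_ size_a); rewrite ltnn.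
Qed.

Definition code_type :=
  ({ffun 'I_n * 'I_n -> 'I_n.+1} * {ffun 'I_n -> 'I_n.+1} * 'I_n.+1)%type.

Lemma card_code_type : #|{: code_type}| = (n.+1 ^ (n ^ 2 + n + 1))%N.
Proof. by rewrite !card_prod !card_ffun !card_prod !card_ord -mulnn !expnD. Qed.

(* By commutativity one n x n table holds the sums on and above the diagonal
   and the products below it; the squares are stored separately. *)
Definition code (a : seq R) : code_type :=
  ([ffun p : 'I_n * 'I_n => if (p.1 <= p.2)%N
       then position a (a`_p.1 + a`_p.2)
       else position a (a`_p.2 * a`_p.1)],
   [ffun i : 'I_n => position a (a`_i * a`_i)],
   position a 1).

Section SameCode.

Variables a b : seq R.
Hypotheses (size_a : (size a <= n)%N) (size_b : (size b <= n)%N).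
Hypothesis code_ab : code a = code b.

Lemma code_position_add (i j : 'I_n) :
  position a (a`_i + a`_j) = position b (b`_i + b`_j).
Proof.
have := congr1 (fun c : code_type => c.1.1 (i, j)) code_ab.
have := congr1 (fun c : code_type => c.1.1 (j, i)) code_ab.
rewrite /= !ffunE /=; case: (leqP i j) => [_ _ -> // | /ltnW -> + _].
by rewrite addrC [b`_j + _]addrC.
Qed.

Lemma code_position_mul (i j : 'I_n) :
  position a (a`_i * a`_j) = position b (b`_i * b`_j).
Proof.
have := congr1 (fun c : code_type => c.1.1 (i, j)) code_ab.
have := congr1 (fun c : code_type => c.1.1 (j, i)) code_ab.
have := congr1 (fun c : code_type => c.1.2 j) code_ab.
rewrite /= !ffunE /=; case: (ltngtP i j) => [_ _ -> // | _ _ _ | /val_inj <- -> //].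
by rewrite mulrC [b`_j * _]mulrC.
Qed.

Let index_lt x : x \in a -> (index x a < n)%N.
Proof. by move=> x_a; rewrite (leq_trans _ size_a) ?index_mem. Qed.

Let ord_index x (x_a : x \in a) : 'I_n := Ordinal (index_lt x_a).

Lemma transfer1 : 1 \in a -> transfer a b 1 = 1.
Proof.
by apply: transfer_position => //; exact: (congr1 (fun c : code_type => c.2) code_ab).
Qed.

Lemma transferD x y : x \in a -> y \in a -> x + y \in a ->
  transfer a b (x + y) = transfer a b x + transfer a b y.
Proof.
move=> x_a y_a; apply: transfer_position => //.
by have := code_position_add (ord_index x_a) (ord_index y_a); rewrite /= !nth_index.
Qed.

Lemma transferM x y : x \in a -> y \in a -> x * y \in a ->
  transfer a b (x * y) = transfer a b x * transfer a b y.
Proof.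
move=> x_a y_a; apply: transfer_position => //.
by have := code_position_mul (ord_index x_a) (ord_index y_a); rewrite /= !nth_index.
Qed.

End SameCode.

End PositionCode.

Section AdequateCode.

Variables (K : fieldType) (n : nat).

Lemma adequate_code_eq (r r' : K) (A : {fset K}) a b :
  (size (r :: a) <= n)%N -> (size (r' :: b) <= n)%N ->
  adequate r A -> {subset A <= r :: a} ->
  code n (r :: a) = code n (r' :: b) -> r' = r.
Proof.
move=> size_a size_b [_ fix_r] sub_A code_ab.
have <- : transfer (r :: a) (r' :: b) r = r' by rewrite /transfer /= eqxx.
apply: fix_r.
- by move=> /sub_A; exact: (transfer1 size_a size_b code_ab).
- move=> x y /sub_A x_a /sub_A y_a /sub_A xy_a.
  exact: (transferD size_a size_b code_ab x_a y_a xy_a).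
- move=> x y /sub_A x_a /sub_A y_a /sub_A xy_a.
  exact: (transferM size_a size_b code_ab x_a y_a xy_a).
Qed.

(* Junk value fset0 when r is not in Ktilde_n. *)
Definition adequate_witness (r : K) : {fset K} :=
  epsilon (inhabits fset0) (fun A => (#|` A| <= n)%N /\ adequate r A).

Lemma adequate_witnessP r : Ktilde_n n r ->
  (#|` adequate_witness r| <= n)%N /\ adequate r (adequate_witness r).
Proof. exact: epsilon_spec. Qed.

Definition adequate_seq (r : K) : seq K := r :: rem r (adequate_witness r).

Lemma size_adequate_seq r : Ktilde_n n r -> (size (adequate_seq r) <= n)%N.
Proof.
move=> /adequate_witnessP [card_A [r_A _]].
by rewrite /= size_rem // prednK // cardfs_gt0; apply/fset0Pn; exists r.
Qed.

Lemma adequate_seq_sub r : {subset adequate_witness r <= adequate_seq r}.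
Proof.
move=> x x_A; rewrite inE (mem_rem_uniq _ (fset_uniq _)) inE /= x_A andbT.
by case: eqP.
Qed.

Definition adequate_code (r : K) : code_type n := code n (adequate_seq r).

Lemma adequate_code_inj x y : Ktilde_n n x -> Ktilde_n n y ->
  adequate_code x = adequate_code y -> x = y.
Proof.
move=> x_n y_n /esym; apply: (adequate_code_eq (A := adequate_witness y)).
- exact: size_adequate_seq.
- exact: size_adequate_seq.
- by case: (adequate_witnessP y_n).
- exact: adequate_seq_sub.
Qed.

Lemma card_Ktilde_n (s : seq K) : uniq s -> (forall r, r \in s -> Ktilde_n n r) ->
  (size s <= n.+1 ^ (n ^ 2 + n + 1))%N.
Proof.
move=> uniq_s s_n; rewrite -card_code_type -(size_map adequate_code).
have uniq_codes : uniq (map adequate_code s).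
  by rewrite map_inj_in_uniq // => x y x_s y_s; apply: adequate_code_inj; apply: s_n.
by rewrite -(card_uniqP uniq_codes) max_card.
Qed.

End AdequateCode.

Definition adequate_size (K : fieldType) (r : K) : nat :=
  epsilon (inhabits 0%N) (fun n => Ktilde_n n r).

Lemma adequate_sizeP (K : fieldType) (r : K) : Ktilde r -> Ktilde_n (adequate_size r) r.
Proof.
by case=> A A_r; apply: (epsilon_spec _ (fun n => Ktilde_n n r)); exists #|` A|, A.
Qed.

Theorem theorem2 (K : fieldType) :
  (forall n : nat, (1 <= n)%N ->
     forall s : seq K, uniq s -> (forall r, r \in s -> Ktilde_n n r) ->
       (size s <= (n.+1) ^ (n ^ 2 + n + 1))%N)
  /\
  (exists g : K -> nat,
     forall x y : K, Ktilde x -> Ktilde y -> g x = g y -> x = y).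
Proof.
split=> [n _ | ]; first exact: (@card_Ktilde_n K n).
pose g (x : K) :=
  let m := adequate_size x in choice.pickle (m, choice.pickle (adequate_code m x)).
exists g => x y /adequate_sizeP x_m /adequate_sizeP y_m.
move=> /(pcan_inj choice.pickleK) [eq_m].
move: x_m; rewrite eq_m => x_m /(pcan_inj choice.pickleK).
exact: adequate_code_inj.
Qed.
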